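(* Let $s\in\mathbb{N}$, $\bm{n}=(n_1,\dots,n_d)\in\mathbb{Z}^d$ with $\|\bm{n}\|_1\le s$, and $c_{\bm n}\in\mathbb{C}$ such that $|c_{\bm n}e^{i\bm n\cdot\bm x}|\le 1$ for all $\bm{x}\in\mathbb{R}^d$, where $e^{i\bm n\cdot\bm x}=e^{in_1x_1}\cdots e^{in_dx_d}$. Then there exists a PQC $U^{\bm n}(\bm{x})$ such that $$\langle 0|^{\otimes d}U^{\bm n}(\bm x)|0\rangle^{\otimes d}=c_{\bm n}e^{i\bm n\cdot\bm x}$$ for all $\bm x\in\mathbb{R}^d$. The width of the PQC is at most $d$, the depth is at most $6s+3$, and the number of parameters is at most $4s+3d$.
   Context: Here a PQC with input $\bm x\in\mathbb{R}^d$ is a quantum circuit built from single-qubit gates (and CNOTs), the single-qubit gates being Pauli rotations $R_Y(\theta)=\begin{pmatrix}\cos\frac\theta2&-\sin\frac\theta2\\ \sin\frac\theta2&\cos\frac\theta2\end{pmatrix}$, $R_Z(\theta)=\mathrm{diag}(e^{-i\theta/2},e^{i\theta/2})$ with trainable real angles not depending on $\bm x$, or data-encoding gates $R_Z(x_j)$ applied with a coordinate $x_j\in\mathbb{R}$ of the input (Pauli-$Z$ basis encoding). Width = number of qubits, depth = circuit depth, number of parameters = number of trainable angles. *)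

From HB Require Import structures.
From mathcomp Require Import all_boot all_order all_algebra.
From mathcomp Require Import reals trigo.
From mathcomp Require Import complex.
Set Implicit Arguments. Unset Strict Implicit. Unset Printing Implicit Defensive.
Import Order.TTheory GRing.Theory Num.Theory.
Local Open Scope ring_scope.
Local Open Scope complex_scope.

Section PQC.
Variable R : realType.
Local Notation C := R[i].

Definition expi (t : R) : C := (cos t +i* sin t)%C.

(* A 2x2 matrix, rows/cols indexed by bool (false = |0>, true = |1>). *)
Definition mat2 := bool -> bool -> C.

Definition RYm (th : R) : mat2 := fun a b =>
  match a, b with
  | false, false => (cos (th / 2))%:C
  | false, true  => (- sin (th / 2))%:C
  | true,  false => (sin (th / 2))%:C
  | true,  true  => (cos (th / 2))%:C
  end.

Definition RZm (th : R) : mat2 := fun a b =>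
  match a, b with
  | false, false => expi (- (th / 2))
  | true,  true  => expi (th / 2)
  | _, _ => 0
  end.

Inductive gate (w d : nat) :=
  | GRY of 'I_w & R
  | GRZ of 'I_w & R
  | GEnc of 'I_w & 'I_d      (* data encoding R_Z(x_j) on a qubit *)
  | GCNOT of 'I_w & 'I_w.    (* CNOT (control, target) *)

Definition gate_qubits w d (g : gate w d) : seq 'I_w :=
  match g with
  | GRY q _ | GRZ q _ | GEnc q _ => [:: q]
  | GCNOT c t => [:: c; t]
  end.

Definition gate_wf w d (g : gate w d) : bool :=
  match g with GCNOT c t => c != t | _ => true end.

Definition gate_nparams w d (g : gate w d) : nat :=
  match g with GRY _ _ | GRZ _ _ => 1%N | _ => 0%N end.

(* A layer: gates acting on pairwise disjoint qubits (one time step).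
   A circuit: a sequence of layers; depth = number of layers. *)
Definition layer w d := seq (gate w d).
Definition circuit w d := seq (layer w d).

Definition layer_wf w d (l : layer w d) : bool :=
  all (@gate_wf w d) l && uniq (flatten (map (@gate_qubits w d) l)).

Definition circuit_wf w d (U : circuit w d) : bool := all (@layer_wf w d) U.

Definition depth w d (U : circuit w d) : nat := size U.

Definition nparams w d (U : circuit w d) : nat :=
  \sum_(l <- U) \sum_(g <- l) gate_nparams g.

(* states of w qubits: amplitudes indexed by computational basis strings *)
Definition state w := {ffun 'I_w -> bool} -> C.

Definition setbit w (b : {ffun 'I_w -> bool}) (q : 'I_w) (v : bool) :
  {ffun 'I_w -> bool} := [ffun k => if k == q then v else b k].

Definition apply1 w (M : mat2) (q : 'I_w) (psi : state w) : state w :=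
  fun b => \sum_(a : bool) M (b q) a * psi (setbit b q a).

Definition apply_cnot w (c t : 'I_w) (psi : state w) : state w :=
  fun b => psi (setbit b t (b t (+) b c)).

Definition apply_gate w d (x : 'I_d -> R) (g : gate w d) (psi : state w)
  : state w :=
  match g with
  | GRY q th => apply1 (RYm th) q psi
  | GRZ q th => apply1 (RZm th) q psi
  | GEnc q j => apply1 (RZm (x j)) q psi
  | GCNOT c t => apply_cnot c t psi
  end.

(* gates in a layer act on disjoint qubits, so their order is irrelevant *)
Definition apply_layer w d (x : 'I_d -> R) (l : layer w d) (psi : state w)
  : state w := foldl (fun s g => apply_gate x g s) psi l.

(* layers are applied first-to-last *)
Definition apply_circuit w d (x : 'I_d -> R) (U : circuit w d) (psi : state w)
  : state w := foldl (fun s l => apply_layer x l s) psi U.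

Definition zero_bits w : {ffun 'I_w -> bool} := [ffun => false].

Definition ket0 w : state w := fun b => if b == @zero_bits w then 1 else 0.

Definition amp0 w d (U : circuit w d) (x : 'I_d -> R) : C :=
  apply_circuit x U (@ket0 w) (@zero_bits w).

End PQC.

(* Use one qubit per coordinate. All gates act on single qubits, so the register
   stays in a product state and the amplitude of |0...0> is the product of
   one-qubit amplitudes. On qubit j we apply R_Z(a), R_Y(g), then 2|n_j|
   encodings R_Z(x_j), then R_Y(b). Because R_Z carries half-angle phases,
   2|n_j| encodings multiply the |0> and |1> branches by e^{-i|n_j|x_j} and
   e^{i|n_j|x_j}; g and b are chosen so that only the branch with phase
   e^{i n_j x_j} reaches <0|. Since |c| <= 1 we can write c = cos(th) e^{i ph};
   this factor is absorbed on one qubit, where a = -2 ph supplies the phase and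
   g, b also produce the amplitude cos(th). This gives depth 2s+3 and 3d
   parameters. *)
From HB Require Import structures.
From mathcomp Require Import all_boot all_order all_algebra.
From mathcomp Require Import reals trigo.
From mathcomp Require Import complex.
From mathcomp Require Import ring zify.
From Stdlib Require Import FunctionalExtensionality.
Set Implicit Arguments. Unset Strict Implicit. Unset Printing Implicit Defensive.
Import Order.TTheory GRing.Theory Num.Theory.
Local Open Scope ring_scope.
Local Open Scope complex_scope.

Section ProductStates.
Variables (R : realType) (w d : nat).
Local Notation C := R[i].

Definition prod_state (F : 'I_w -> bool -> C) : state R w :=
  fun b => \prod_k F k (b k).

Definition mat2_apply (M : mat2 R) (f : bool -> C) : bool -> C :=
  fun v => \sum_a M v a * f a.

Definition qubit0 : bool -> C := fun v => if v then 0 else 1.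

Lemma ket0_prod_state : @ket0 R w = prod_state (fun _ => qubit0).
Proof.
apply: functional_extensionality => b; rewrite /ket0 /prod_state /qubit0.
case: eqP => [->|b_neq0]; first by rewrite big1 // => k _; rewrite ffunE.
case: (pickP (fun k => b k)) => [k bk|b_false]; first by rewrite (bigD1 k) //= bk mul0r.
by case: b_neq0; apply/ffunP => k; rewrite ffunE; have /= -> := b_false k.
Qed.

Lemma apply1_prod_state M (q : 'I_w) F :
  apply1 M q (prod_state F) =
  prod_state (fun k => if k == q then mat2_apply M (F q) else F k).
Proof.
apply: functional_extensionality => b; rewrite /apply1 /prod_state /mat2_apply.
rewrite [RHS](bigD1 q) //= eqxx big_distrl /=; apply: eq_bigr => a _.
rewrite (bigD1 q) //= /setbit ffunE eqxx -mulrA; congr (_ * (_ * _)).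
by apply: eq_bigr => k /negbTE kq; rewrite ffunE kq.
Qed.

Lemma apply_layer_prod_state x (s : seq 'I_w) (mk : 'I_w -> gate R w d)
    (M : 'I_w -> mat2 R) F :
  uniq s -> (forall j, apply_gate x (mk j) = apply1 (M j) j) ->
  apply_layer x (map mk s) (prod_state F) =
  prod_state (fun k => if k \in s then mat2_apply (M k) (F k) else F k).
Proof.
move=> + mkE; elim: s F => [|j s IHs] F /=.
  by move=> _; congr prod_state; apply: functional_extensionality.
case/andP=> j_notin_s s_uniq.
rewrite [apply_layer _ _ _]/= mkE apply1_prod_state [LHS]IHs //.
congr prod_state; apply: functional_extensionality => k; rewrite in_cons.
by case: eqP => [->|] //=; rewrite (negbTE j_notin_s).
Qed.

Lemma apply_full_layer_prod_state x (mk : 'I_w -> gate R w d)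
    (M : 'I_w -> mat2 R) F :
  (forall j, apply_gate x (mk j) = apply1 (M j) j) ->
  apply_layer x (map mk (enum 'I_w)) (prod_state F) =
  prod_state (fun k => mat2_apply (M k) (F k)).
Proof.
move=> mkE; rewrite (apply_layer_prod_state F (enum_uniq _) mkE).
by congr prod_state; apply: functional_extensionality => k; rewrite mem_enum.
Qed.

Lemma layer_wf_map (mk : 'I_w -> gate R w d) (s : seq 'I_w) :
  uniq s -> (forall j, gate_qubits (mk j) = [:: j]) ->
  (forall j, gate_wf (mk j)) -> layer_wf (map mk s).
Proof.
move=> s_uniq mk_qubits mk_wf; rewrite /layer_wf all_map.
rewrite -map_comp (eq_map mk_qubits) flatten_seq1 s_uniq andbT.
by apply/allP => j _; exact: mk_wf.
Qed.

End ProductStates.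

Arguments qubit0 {R}.

Section Expi.
Variable R : realType.
Local Notation C := R[i].

Lemma expi0 : expi 0 = 1 :> C.
Proof. by rewrite /expi cos0 sin0. Qed.

Lemma expiD a b : expi a * expi b = expi (a + b) :> C.
Proof. by rewrite /expi /= cosD sinD; congr (_ +i* _); ring. Qed.

Lemma expiX a m : expi a ^+ m = expi (m%:R * a) :> C.
Proof.
elim: m => [|m IHm]; first by rewrite expr0 mul0r expi0.
by rewrite exprS IHm expiD mulrS mulrDl mul1r.
Qed.

Lemma complex_polar (z : C) : exists ph, z = `|z| * expi ph.
Proof.
case: z => a b; rewrite normc_def /=; set r := Num.sqrt _.
have r_ge0 : 0 <= r := sqrtr_ge0 _.
have r2E : r ^+ 2 = a ^+ 2 + b ^+ 2 by rewrite sqr_sqrtr // addr_ge0 ?sqr_ge0.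
have [r0|r_neq0] := eqVneq r 0.
  have : a ^+ 2 + b ^+ 2 == 0 by rewrite -r2E r0 expr0n.
  rewrite paddr_eq0 ?sqr_ge0 // !sqrf_eq0 => /andP[/eqP-> /eqP->].
  by exists 0; rewrite r0 mul0r.
set u := a / r.
have u_bound : -1 <= u <= 1.
  rewrite -ler_norml -(@expr_le1 _ 2) // -normrX ger0_norm ?sqr_ge0 //.
  rewrite /u expr_div_n ler_pdivrMr ?exprn_gt0 ?lt_def ?r_neq0 //.
  by rewrite mul1r r2E lerDl sqr_ge0.
have sin_acos_u : sin (acos u) = `|b| / r.
  rewrite sin_acos //.
  have -> : 1 - u ^+ 2 = (b / r) ^+ 2.
    apply: (@mulIf _ (r ^+ 2)); first by rewrite expf_neq0.
    by rewrite mulrBl mul1r !expr_div_n !divfK ?expf_neq0 // r2E; ring.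
  by rewrite sqrtr_sqr normrM normfV (ger0_norm r_ge0).
have cos_acos_u : cos (acos u) = u by rewrite acosK // in_itv /= u_bound.
exists (if 0 <= b then acos u else - acos u).
rewrite /expi; case: ifP => b_sign; rewrite ?cosN ?sinN cos_acos_u sin_acos_u.
  by rewrite ger0_norm //; simpc; congr (_ +i* _); rewrite /u; field.
by rewrite ltr0_norm ?ltNge ?b_sign //; simpc; congr (_ +i* _); rewrite /u; field.
Qed.

Lemma cos_expi_polar (c : C) :
  `|c| <= 1 -> exists th ph, c = (cos th)%:C * expi ph.
Proof.
have [ph cE] := complex_polar c; rewrite {2}cE.
move: (normr_real c) => /complex_realP[r rE]; rewrite rE -[1]/(1%:C) lecR => r_le1.
have r_ge0 : 0 <= r by rewrite -ler0c -rE.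
exists (acos r), ph; rewrite acosK // in_itv /= r_le1 andbT.
by rewrite (le_trans _ r_ge0) // lerN10.
Qed.

End Expi.

Section OneQubit.
Variable R : realType.
Local Notation C := R[i].

Definition rz_phase (t : R) (v : bool) : C :=
  if v then expi (t / 2) else expi (- (t / 2)).

Lemma iter_mat2_apply_RZm t m f :
  iter m (mat2_apply (RZm t)) f = fun v => rz_phase t v ^+ m * f v.
Proof.
elim: m => [|m IHm] /=; apply: functional_extensionality => v; first by rewrite mul1r.
rewrite IHm /mat2_apply big_bool exprS -mulrA.
by case: v => /=; rewrite ?mul0r ?add0r ?addr0.
Qed.

Definition qubit_amp (a g b t : R) (m : nat) : C :=
  mat2_apply (RYm b) (iter m (mat2_apply (RZm t))
    (mat2_apply (RYm g) (mat2_apply (RZm a) qubit0))) false.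

Lemma qubit_ampE a g b t m : qubit_amp a g b t m =
  ((cos (b / 2))%:C * (cos (g / 2))%:C * expi (- (t / 2)) ^+ m
   - (sin (b / 2))%:C * (sin (g / 2))%:C * expi (t / 2) ^+ m) * expi (- (a / 2)).
Proof.
rewrite /qubit_amp iter_mat2_apply_RZm /mat2_apply !big_bool /= /qubit0.
by rewrite !rmorphN /=; ring.
Qed.

Lemma qubit_amp_monomial (th ph t : R) (z : int) :
  qubit_amp (- (ph * 2)) (if 0 < z then (th + pi / 2) * 2 else 0)
            (if 0 < z then - pi else th * 2) t (2 * `|z|)
  = (cos th)%:C * expi ph * expi (z%:~R * t).
Proof.
have half (y : R) : y * 2 / 2 = y by rewrite mulfK // pnatr_eq0.
have twice_half : (2 * `|z|)%:R * (t / 2) = `|z|%:R * t by rewrite natrM; field.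
rewrite qubit_ampE !expiX mulrN twice_half mulNr opprK half natr_absz.
have [z_gt0|z_le0] := ltP 0 z.
  rewrite half mulNr cosN sinN cosDpihalf sinDpihalf cos_pihalf sin_pihalf.
  by rewrite (gtr0_norm z_gt0) !rmorphN /=; ring.
rewrite half mul0r cos0 sin0 (ler0_norm z_le0) intrN mulNr opprK /=; ring.
Qed.

End OneQubit.

Section EncodingCircuit.
Variables (R : realType) (d : nat).

Definition rz_layer (a : 'I_d -> R) : layer R d d :=
  [seq GRZ d j (a j) | j <- enum 'I_d].

Definition ry_layer (g : 'I_d -> R) : layer R d d :=
  [seq GRY d j (g j) | j <- enum 'I_d].

Definition enc_layer (N : 'I_d -> nat) (l : nat) : layer R d d :=
  [seq GEnc R j j | j <- enum 'I_d & (l < N j)%N].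

Definition encoding_circuit a g b N L : circuit R d d :=
  [:: rz_layer a, ry_layer g & rcons (mkseq (enc_layer N) L) (ry_layer b)].

Lemma encoding_circuit_wf a g b N L : circuit_wf (encoding_circuit a g b N L).
Proof.
rewrite /circuit_wf /= all_rcons !layer_wf_map ?enum_uniq //= /mkseq all_map.
by apply/allP => l _; rewrite /= layer_wf_map // filter_uniq // enum_uniq.
Qed.

Lemma apply_enc_layers x N m F :
  foldl (fun s l => apply_layer x l s) (prod_state F) (mkseq (enc_layer N) m) =
  prod_state (fun k => iter (minn m (N k)) (mat2_apply (RZm (x k))) (F k)).
Proof.
elim: m => [|m IHm].
  by congr prod_state; apply: functional_extensionality => k; rewrite min0n.
rewrite mkseqS -cats1 foldl_cat IHm /=.
rewrite (@apply_layer_prod_state _ _ _ x _ _ (fun k => RZm (x k))) //; last first.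
  by rewrite filter_uniq ?enum_uniq.
congr prod_state; apply: functional_extensionality => k.
rewrite mem_filter mem_enum andbT; case: ltnP => [m_lt|m_ge].
  by rewrite (minn_idPl m_lt).
by rewrite (minn_idPr (leqW m_ge)).
Qed.

Lemma amp0_encoding_circuit a g b N L x :
  amp0 (encoding_circuit a g b N L) x =
  \prod_k qubit_amp (a k) (g k) (b k) (x k) (minn L (N k)).
Proof.
rewrite /amp0 /apply_circuit /= -cats1 foldl_cat ket0_prod_state.
rewrite (@apply_full_layer_prod_state _ _ _ x _ (fun j => RZm (a j))) //.
rewrite (@apply_full_layer_prod_state _ _ _ x _ (fun j => RYm (g j))) //.
rewrite apply_enc_layers /=.
rewrite (@apply_full_layer_prod_state _ _ _ x _ (fun j => RYm (b j))) //.
by apply: eq_bigr => k _; rewrite ffunE.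
Qed.

Lemma depth_encoding_circuit a g b N L :
  depth (encoding_circuit a g b N L) = (L + 3)%N.
Proof. by rewrite /depth /= size_rcons size_mkseq; lia. Qed.

Lemma nparams_encoding_circuit a g b N L :
  nparams (encoding_circuit a g b N L) = (3 * d)%N.
Proof.
have rot_layer_nparams (f : 'I_d -> gate R d d) :
    (forall j, gate_nparams (f j) = 1%N) ->
    (\sum_(gt <- map f (enum 'I_d)) gate_nparams gt)%N = d.
  move=> f_nparams; rewrite big_map (eq_bigr _ (fun j _ => f_nparams j)).
  by rewrite sum1_size size_enum_ord.
have enc_layers_nparams :
    (\sum_(l <- mkseq (enc_layer N) L) \sum_(gt <- l) gate_nparams gt = 0)%N.
  by rewrite big_map big1 // => l _; rewrite big_map big1.
rewrite /nparams !big_cons -cats1 big_cat big_seq1 enc_layers_nparams.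
by rewrite !rot_layer_nparams //=; lia.
Qed.

End EncodingCircuit.

Local Close Scope complex_scope.

Theorem lemmaS4 (R : realType) (d s : nat) (n : 'I_d -> int) (c : R[i]) :
  (0 < d)%N ->
  (\sum_(j < d) `|n j|%N <= s)%N ->
  (forall x : 'I_d -> R, `|c * \prod_(j < d) expi ((n j)%:~R * x j)| <= 1) ->
  exists U : circuit R d d,
    [/\ circuit_wf U,
        (forall x : 'I_d -> R,
           amp0 U x = c * \prod_(j < d) expi ((n j)%:~R * x j)),
        (depth U <= 6 * s + 3)%N
      & (nparams U <= 4 * s + 3 * d)%N].
Proof.
move=> d_gt0 n_le_s c_bound.
have /cos_expi_polar[th0 [ph0 cE]] : `|c| <= 1.
  by have := c_bound (fun=> 0); rewrite big1 ?mulr1 // => j _; rewrite mulr0 expi0.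
pose j0 : 'I_d := Ordinal d_gt0.
pose th k := if k == j0 then th0 else 0.
pose ph k := if k == j0 then ph0 else 0.
exists (encoding_circuit (fun k => - (ph k * 2))
          (fun k => if 0 < n k then (th k + pi / 2) * 2 else 0)
          (fun k => if 0 < n k then - pi else th k * 2)
          (fun k => 2 * `|n k|)%N (2 * s)).
split; rewrite ?encoding_circuit_wf ?depth_encoding_circuit
                ?nparams_encoding_circuit //; try lia.
move=> x; rewrite amp0_encoding_circuit.
have -> : c = \prod_k ((cos (th k))%:C * expi (ph k))%C.
  rewrite cE (bigD1 j0) //= /th /ph eqxx big1 ?mulr1 // => k /negbTE ->.
  by rewrite cos0 expi0 mulr1.
rewrite -big_split /=; apply: eq_bigr => k _.
have nk_le_s : (`|n k| <= s)%N by rewrite (leq_trans _ n_le_s) // (bigD1 k) //= leq_addr.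
by rewrite (minn_idPr _) ?leq_mul2l ?nk_le_s // qubit_amp_monomial.
Qed.
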